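(* Let $N=\{1,\ldots,n\}$, $\mathcal{X}=\{-1,1\}^n$, and let $\phi:\mathcal{X}\to\{-1,1\}$ be a deterministic voting rule. Let $w\in\mathbb{R}_+^n$ be a nonzero nonnegative weight vector. Then: (1) $\phi$ is a weighted majority rule (WMR) with weight vector $w$ if and only if $$\frac{\sum_{i\in N} w_i r_i(\phi,p)}{\sum_{i\in N} w_i}\ \geq\ \frac12 \quad\text{for all } p\in\Delta(\mathcal{X}).$$ (2) $\phi$ is a WMR with weight vector $w$ allowing no ties if and only if $$\frac{\sum_{i\in N} w_i r_i(\phi,p)}{\sum_{i\in N} w_i}\ >\ \frac12 \quad\text{for all } p\in\Delta(\mathcal{X}).$$
   Context: $\Delta(\mathcal{X})$ is the set of all probability distributions on $\mathcal{X}$. For $p\in\Delta(\mathcal{X})$, the responsiveness of individual $i$ is $r_i(\phi,p)=p(\{x\in\mathcal{X}:\phi(x)=x_i\})$. A deterministic voting rule $\phi$ is a weighted majority rule (WMR) with nonzero weight vector $w\in\mathbb{R}^n$ if $\phi(x)=1$ whenever $\sum_i w_ix_i>0$ and $\phi(x)=-1$ whenever $\sum_i w_ix_i<0$ (profiles with $\sum_i w_ix_i=0$, called ties, may be assigned arbitrarily). The WMR with weight vector $w$ allows no ties if $\sum_i w_ix_i\neq 0$ for every $x\in\mathcal{X}$. *)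

From mathcomp Require Import all_boot all_order all_algebra.
Set Implicit Arguments. Unset Strict Implicit. Unset Printing Implicit Defensive.
Import Order.TTheory GRing.Theory Num.Theory.
Local Open Scope ring_scope.

(* A profile x in X = {-1,1}^n is encoded as a finite function 'I_n -> bool,
   where true stands for +1 and false for -1. *)
Definition profile (n : nat) := {ffun 'I_n -> bool}.

Definition vote {R : numDomainType} (b : bool) : R := if b then 1 else -1.

Definition is_distr {R : numDomainType} (n : nat) (p : profile n -> R) : Prop :=
  (forall x, 0 <= p x) /\ \sum_(x : profile n) p x = 1.

Definition responsiveness {R : numDomainType} (n : nat)
  (phi : profile n -> bool) (p : profile n -> R) (i : 'I_n) : R :=
  \sum_(x : profile n | phi x == x i) p x.

Definition wscore {R : numDomainType} (n : nat) (w : 'I_n -> R) (x : profile n) : R :=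
  \sum_(i < n) w i * vote (x i).

Definition is_WMR {R : numDomainType} (n : nat) (phi : profile n -> bool)
  (w : 'I_n -> R) : Prop :=
  forall x, (0 < wscore w x -> phi x = true) /\ (wscore w x < 0 -> phi x = false).

Definition no_ties {R : numDomainType} (n : nat) (w : 'I_n -> R) : Prop :=
  forall x : profile n, wscore w x != 0.

From mathcomp Require Import all_boot all_order all_algebra.
From mathcomp Require Import ring lra.
Import Order.TTheory GRing.Theory Num.Theory.
Local Open Scope ring_scope.

(* Let [margin x = vote (phi x) * \sum_i w_i x_i] measure how far phi x agrees
   with the weighted vote at x.  As [(a == b) = (1 + vote a * vote b) / 2], the
   weighted responsiveness is [(W + E_p[margin]) / 2] with [W = \sum_i w_i > 0],
   so the normalised responsiveness exceeds 1/2 by exactly [E_p[margin] / 2W].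
   Being a WMR (without ties) means [margin >= 0] ([margin > 0]) pointwise, and
   testing point masses shows this is equivalent to [E_p[margin] >= 0]
   ([> 0]) for every distribution p. *)

Section Expectation.
Variables (R : numDomainType) (T : finType).

Definition point_mass (x : T) : T -> R := fun y => (y == x)%:R.

Lemma point_mass_distr (x : T) :
  (forall y, 0 <= point_mass x y) /\ \sum_y point_mass x y = 1.
Proof.
split=> [y|]; first exact: ler0n.
by rewrite (bigD1 x) //= /point_mass eqxx big1 ?addr0 // => y /negbTE ->.
Qed.

Lemma sum_point_mass (x : T) (g : T -> R) :
  \sum_y point_mass x y * g y = g x.
Proof.
rewrite (bigD1 x) //= /point_mass eqxx mul1r big1 ?addr0 //.
by move=> y /negbTE ->; rewrite mul0r.
Qed.

Lemma distr_expectation_ge0P (g : T -> R) :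
  (forall p : T -> R, (forall x, 0 <= p x) /\ \sum_x p x = 1 ->
     0 <= \sum_x p x * g x)
  <-> forall x, 0 <= g x.
Proof.
split=> [Hg x | Hg p [p_ge0 _]].
  by rewrite -(sum_point_mass x g); apply/Hg/point_mass_distr.
by apply: sumr_ge0 => x _; apply: mulr_ge0.
Qed.

Lemma distr_expectation_gt0P (g : T -> R) :
  (forall p : T -> R, (forall x, 0 <= p x) /\ \sum_x p x = 1 ->
     0 < \sum_x p x * g x)
  <-> forall x, 0 < g x.
Proof.
split=> [Hg x | Hg p [p_ge0 p_sum1]].
  by rewrite -(sum_point_mass x g); apply/Hg/point_mass_distr.
have /hasP[x _ px_gt0] : has (fun x => true && (0 < p x)) (index_enum T).
  by rewrite -psumr_neq0 ?p_sum1 ?oner_neq0.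
rewrite (bigD1 x) //= ltr_wpDr ?mulr_gt0 //.
by apply: sumr_ge0 => y _; apply/mulr_ge0/ltW.
Qed.

End Expectation.

Section Responsiveness.
Variables (R : realFieldType) (n : nat) (phi : profile n -> bool) (w : 'I_n -> R).

Definition margin (x : profile n) : R := vote (phi x) * wscore w x.

Lemma is_WMR_margin : is_WMR phi w <-> forall x, 0 <= margin x.
Proof.
rewrite /margin /vote; split=> [H x | H x].
  have [pos_phi neg_phi] := H x; case: (phi x) pos_phi neg_phi => pos_phi neg_phi.
    by rewrite mul1r leNgt; apply/negP => /neg_phi.
  by rewrite mulN1r oppr_ge0 leNgt; apply/negP => /pos_phi.
by have := H x; case: (phi x); rewrite ?mul1r ?mulN1r => Hx; split=> Hs //; lra.
Qed.

Lemma is_WMR_no_ties_margin :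
  is_WMR phi w /\ no_ties w <-> forall x, 0 < margin x.
Proof.
split=> [[/is_WMR_margin H nt] x | H].
  rewrite lt_def H andbT mulf_eq0 negb_or nt andbT.
  by rewrite /vote; case: (phi x); rewrite ?oppr_eq0 oner_eq0.
split; first by apply/is_WMR_margin => x; apply: ltW.
by move=> x; apply/eqP => score0; have := H x; rewrite /margin score0 mulr0 ltxx.
Qed.

Lemma natr_eq_vote (a b : bool) : ((a == b)%:R : R) = (1 + vote a * vote b) / 2.
Proof. by case: a; case: b; rewrite /vote /=; field. Qed.

Lemma responsivenessE (p : profile n -> R) (i : 'I_n) :
  responsiveness phi p i = \sum_x p x * (phi x == x i)%:R.
Proof.
rewrite /responsiveness big_mkcond; apply: eq_bigr => x _.
by case: (phi x == x i); rewrite ?mulr1 ?mulr0.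
Qed.

Lemma weighted_responsivenessE (p : profile n -> R) :
  \sum_i w i * responsiveness phi p i
  = ((\sum_i w i) * \sum_x p x + \sum_x p x * margin x) / 2.
Proof.
under eq_bigr do rewrite responsivenessE mulr_sumr.
rewrite exchange_big /= mulr_sumr -big_split /= mulr_suml; apply: eq_bigr => x _.
under eq_bigr do rewrite natr_eq_vote.
rewrite /margin /wscore mulr_suml !mulr_sumr -big_split mulr_suml /=.
by apply: eq_bigr => i _; ring.
Qed.

Lemma normalized_responsivenessE (p : profile n -> R) :
  is_distr p -> 0 < \sum_i w i ->
  (\sum_i w i * responsiveness phi p i) / (\sum_i w i)
  = 1 / 2 + (\sum_x p x * margin x) / (2 * \sum_i w i).
Proof.
move=> [_ p_sum1] W_gt0; rewrite weighted_responsivenessE p_sum1.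
by field; rewrite gt_eqF.
Qed.

End Responsiveness.

Theorem lemma2 (R : realFieldType) (n : nat) (phi : profile n -> bool)
  (w : 'I_n -> R) (w_ge0 : forall i, 0 <= w i) (w_neq0 : exists i, w i != 0) :
  (is_WMR phi w <->
     forall p : profile n -> R, is_distr p ->
       (\sum_(i < n) w i * responsiveness phi p i) / (\sum_(i < n) w i) >= 1 / 2)
  /\
  (is_WMR phi w /\ no_ties w <->
     forall p : profile n -> R, is_distr p ->
       (\sum_(i < n) w i * responsiveness phi p i) / (\sum_(i < n) w i) > 1 / 2).
Proof.
have W_gt0 : 0 < \sum_i w i.
  rewrite lt_def sumr_ge0 // andbT psumr_neq0 //.
  have [i wi_neq0] := w_neq0.
  by apply/hasP; exists i; rewrite ?mem_index_enum //= lt_def wi_neq0 w_ge0.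
have inv2W_gt0 : 0 < (2 * \sum_i w i)^-1 by rewrite invr_gt0 mulr_gt0.
split.
  rewrite is_WMR_margin -distr_expectation_ge0P.
  by split=> H p Dp; move: (H p Dp);
    rewrite normalized_responsivenessE // lerDl pmulr_lge0.
rewrite is_WMR_no_ties_margin -distr_expectation_gt0P.
by split=> H p Dp; move: (H p Dp);
  rewrite normalized_responsivenessE // ltrDl pmulr_lgt0.
Qed.
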